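(* Fix $\lambda\ge 0$, an angular frequency $\omega>0$, an integer $n\ge 1$, layer thicknesses $d_1,\dots,d_{n-1}>0$, magnetic permeabilities $\mu_1,\dots,\mu_n>0$ and electrical conductivities $\sigma_1,\dots,\sigma_n>0$. For $k=1,\dots,n$ let $u_k=\sqrt{\lambda^2+\mathrm{i}\sigma_k\mu_k\omega}$ and $N_k=\dfrac{u_k}{\mathrm{i}\mu_k\omega}$, and define the surface admittances by $Y_n=N_n$ and, for $k=n-1,\dots,1$, $$Y_k=N_k\,\frac{Y_{k+1}+N_k\tanh(d_ku_k)}{N_k+Y_{k+1}\tanh(d_ku_k)},$$ regarded as functions of $\boldsymbol\sigma=(\sigma_1,\dots,\sigma_n)$. For $k=1,\dots,n-1$ set $$a_k=\frac{Y_{k+1}+N_k\tanh(d_ku_k)}{N_k+Y_{k+1}\tanh(d_ku_k)},\qquad b_k=\frac{1}{[N_k+Y_{k+1}\tanh(d_ku_k)]^2\cosh^2(d_ku_k)}.$$ Then the partial derivatives $Y'_{kj}=\partial Y_k/\partial\sigma_j$, $k,j=1,\dots,n$, satisfy $$Y'_{nn}=\frac{1}{2u_n},\qquad Y'_{nj}=0\ \ (j=1,\dots,n-1),$$ and, for $k=n-1,n-2,\dots,1$, $$Y'_{kj}=N_k^2\,b_k\,Y'_{k+1,j}\quad (j=n,n-1,\dots,k+1),$$ $$Y'_{kk}=\frac{a_k}{2u_k}+\frac{b_k}{2}\Big[N_k^2d_k-Y_{k+1}\Big(d_kY_{k+1}+\frac{1}{\mathrm{i}\mu_k\omega}\Big)\Big],$$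 $$Y'_{kj}=0\quad (j=k-1,k-2,\dots,1).$$
   Context: This models a layered soil with $n$ horizontal layers, the $k$-th having thickness $d_k$ (the bottom layer $n$ is infinitely thick), conductivity $\sigma_k$ and permeability $\mu_k$; $\mathrm{i}=\sqrt{-1}$ and the square root is the principal branch. $N_k$ is called the characteristic admittance and $Y_k$ the surface admittance at the top of layer $k$. All quantities depend on the auxiliary variable $\lambda$, suppressed from notation, and the derivatives are taken with respect to the conductivities with $\lambda,\omega,d_k,\mu_k$ fixed (assuming the denominators appearing are nonzero). *)

From Stdlib Require Import Reals.
From Coquelicot Require Import Coquelicot.
Open Scope R_scope.

Notation CC := Complex.C.

Definition cexp (z : CC) : CC :=
  (exp (Re z) * cos (Im z), exp (Re z) * sin (Im z)).
Definition ccosh (z : CC) : CC := ((cexp z + cexp (- z)) / 2)%C.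
Definition csinh (z : CC) : CC := ((cexp z - cexp (- z)) / 2)%C.
Definition ctanh (z : CC) : CC := (csinh z / ccosh z)%C.

(* principal square root: Re >= 0, and Im >= 0 on the negative real axis *)
Definition csqrt (z : CC) : CC :=
  let r := Cmod z in
  let x := sqrt ((r + Re z) / 2) in
  let y := sqrt ((r - Re z) / 2) in
  if Rlt_dec (Im z) 0 then (x, - y) else (x, y).

Definition Ci : CC := (0, 1).

(* Layer data: thicknesses d k, permeabilities mu k, conductivities sigma k,
   indexed by k = 1..n (values outside 1..n are irrelevant). *)
Definition u_ (lam omega : R) (mu sigma : nat -> R) (k : nat) : CC :=
  csqrt (RtoC (lam ^ 2) + Ci * RtoC (sigma k * mu k * omega))%C.

Definition N_ (lam omega : R) (mu sigma : nat -> R) (k : nat) : CC :=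
  (u_ lam omega mu sigma k / (Ci * RtoC (mu k * omega)))%C.

Definition Ystep (lam omega : R) (d mu sigma : nat -> R) (k : nat) (Y1 : CC) : CC :=
  let Nk := N_ lam omega mu sigma k in
  let t := ctanh (RtoC (d k) * u_ lam omega mu sigma k)%C in
  (Nk * ((Y1 + Nk * t) / (Nk + Y1 * t)))%C.

(* Yr i = Y_{n-i} *)
Fixpoint Yr (lam omega : R) (n : nat) (d mu sigma : nat -> R) (i : nat) : CC :=
  match i with
  | O => N_ lam omega mu sigma n
  | S i' => Ystep lam omega d mu sigma (n - S i') (Yr lam omega n d mu sigma i')
  end.

Definition Y_ (lam omega : R) (n : nat) (d mu sigma : nat -> R) (k : nat) : CC :=
  Yr lam omega n d mu sigma (n - k).

Definition a_ (lam omega : R) (n : nat) (d mu sigma : nat -> R) (k : nat) : CC :=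
  let Nk := N_ lam omega mu sigma k in
  let Y1 := Y_ lam omega n d mu sigma (S k) in
  let t := ctanh (RtoC (d k) * u_ lam omega mu sigma k)%C in
  ((Y1 + Nk * t) / (Nk + Y1 * t))%C.

Definition b_ (lam omega : R) (n : nat) (d mu sigma : nat -> R) (k : nat) : CC :=
  let Nk := N_ lam omega mu sigma k in
  let Y1 := Y_ lam omega n d mu sigma (S k) in
  let z := (RtoC (d k) * u_ lam omega mu sigma k)%C in
  (/ ((Nk + Y1 * ctanh z) ^ 2 * (ccosh z) ^ 2))%C.

Definition upd (sigma : nat -> R) (j : nat) (t : R) : nat -> R :=
  fun i => if Nat.eqb i j then t else sigma i.

(* Each admittance comes from the next one by the Moebius step
   [Y_k = N_k (Y_(k+1) + N_k T_k) / (N_k + Y_(k+1) T_k)] with [T_k = tanh (d_k u_k)];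
   only [N_k] and [T_k] depend on [sigma_k], so [Y_k] depends on [sigma_k, ..., sigma_n]
   alone.  Differentiating the step in [Y_(k+1)] produces the factor
   [N_k^2 (1 - T_k^2) / (N_k + Y_(k+1) T_k)^2 = N_k^2 b_k], because
   [1 - tanh^2 = 1 / cosh^2]; differentiating it in [sigma_k] through
   [u_k' = i mu_k omega / (2 u_k)], [N_k' = 1 / (2 u_k)] and [T_k' = d_k u_k' (1 - T_k^2)]
   produces the diagonal entry. *)

From Pilot Require Import Defs.
From Stdlib Require Import Reals Lra Lia FunctionalExtensionality.
From Coquelicot Require Import Coquelicot.
Open Scope R_scope.

Definition is_Cderive (f : R -> CC) (x : R) (l : CC) : Prop :=
  is_derive (V := C_R_NormedModule) f x l.

Lemma is_derive_replace (f : R -> R) (x l l' : R) :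
  is_derive f x l -> l = l' -> is_derive f x l'.
Proof. now intros H <-. Qed.

Lemma is_derive_Rplus (f g : R -> R) x a b : is_derive f x a -> is_derive g x b ->
  is_derive (fun t => f t + g t) x (a + b).
Proof. exact (is_derive_plus f g x a b). Qed.

Lemma is_derive_Rminus (f g : R -> R) x a b : is_derive f x a -> is_derive g x b ->
  is_derive (fun t => f t - g t) x (a - b).
Proof. exact (is_derive_minus f g x a b). Qed.

Lemma is_derive_Rmult (f g : R -> R) x a b : is_derive f x a -> is_derive g x b ->
  is_derive (fun t => f t * g t) x (a * g x + f x * b).
Proof. intros Hf Hg; apply (is_derive_mult f g); [exact Hf | exact Hg | apply Rmult_comm]. Qed.

Lemma is_derive_Rcomp (h g : R -> R) x a b : is_derive g x a -> is_derive h (g x) b ->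
  is_derive (fun t => h (g t)) x (a * b).
Proof. intros Hg Hh; exact (is_derive_comp h g x b a Hh Hg). Qed.

Lemma is_Cderive_replace (f : R -> CC) (x : R) (l l' : CC) :
  is_Cderive f x l -> l = l' -> is_Cderive f x l'.
Proof. now intros H <-. Qed.

Lemma is_Cderive_ext f g x l : (forall t, f t = g t) -> is_Cderive f x l -> is_Cderive g x l.
Proof. apply (is_derive_ext (V := C_R_NormedModule)). Qed.

Lemma is_Cderive_Re f x l : is_Cderive f x l -> is_derive (fun t => Re (f t)) x (Re l).
Proof.
  unfold is_Cderive, is_derive; intros H.
  apply filterdiff_ext_lin with (fun y => fst (scal (V := C_R_NormedModule) y l)).
  - apply (filterdiff_comp' (V := C_R_NormedModule) f (fun p : C_R_NormedModule => fst p));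
      [exact H|].
    apply filterdiff_linear, (is_linear_fst (U := R_NormedModule) (V := R_NormedModule)).
  - now intros y; destruct l.
Qed.

Lemma is_Cderive_Im f x l : is_Cderive f x l -> is_derive (fun t => Im (f t)) x (Im l).
Proof.
  unfold is_Cderive, is_derive; intros H.
  apply filterdiff_ext_lin with (fun y => snd (scal (V := C_R_NormedModule) y l)).
  - apply (filterdiff_comp' (V := C_R_NormedModule) f (fun p : C_R_NormedModule => snd p));
      [exact H|].
    apply filterdiff_linear, (is_linear_snd (U := R_NormedModule) (V := R_NormedModule)).
  - now intros y; destruct l.
Qed.

Lemma is_Cderive_parts f x l :
  is_derive (fun t => Re (f t)) x (Re l) -> is_derive (fun t => Im (f t)) x (Im l) ->
  is_Cderive f x l.
Proof.
  unfold is_Cderive, is_derive; intros Hre Him.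
  apply filterdiff_ext with (fun t => (Re (f t), Im (f t))); [now intros y; destruct (f y)|].
  apply filterdiff_ext_lin with (fun y => (scal y (Re l), scal y (Im l))); [|now destruct l].
  apply (filterdiff_comp'_2 (U := R_NormedModule) (V := R_NormedModule)
    (W := prod_NormedModule R_AbsRing R_NormedModule R_NormedModule)
    (fun t => Re (f t)) (fun t => Im (f t)) (fun a b => (a, b)) x _ _ (fun a b => (a, b)));
    [exact Hre | exact Him |].
  apply filterdiff_ext with (fun t => t); [now intros []|].
  apply filterdiff_ext_lin with (fun t => t); [apply filterdiff_id | now intros []].
Qed.

Lemma is_Cderive_const (c : CC) x : is_Cderive (fun _ => c) x 0%C.
Proof. apply (is_derive_const (V := C_R_NormedModule)). Qed.

Lemma is_Cderive_plus f g x a b : is_Cderive f x a -> is_Cderive g x b ->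
  is_Cderive (fun t => (f t + g t)%C) x (a + b)%C.
Proof. apply (is_derive_plus (V := C_R_NormedModule)). Qed.

Lemma is_Cderive_opp f x a : is_Cderive f x a -> is_Cderive (fun t => (- f t)%C) x (- a)%C.
Proof. apply (is_derive_opp (V := C_R_NormedModule)). Qed.

Lemma is_Cderive_mult f g x a b : is_Cderive f x a -> is_Cderive g x b ->
  is_Cderive (fun t => (f t * g t)%C) x (a * g x + f x * b)%C.
Proof.
  intros Hf Hg.
  apply is_Cderive_Re in Hf as Hf1; apply is_Cderive_Im in Hf as Hf2.
  apply is_Cderive_Re in Hg as Hg1; apply is_Cderive_Im in Hg as Hg2.
  apply is_Cderive_parts; simpl.
  - eapply is_derive_replace.
    + apply is_derive_Rminus; apply is_derive_Rmult; eassumption.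
    + unfold Re, Im; ring.
  - eapply is_derive_replace.
    + apply is_derive_Rplus; apply is_derive_Rmult; eassumption.
    + unfold Re, Im; ring.
Qed.

Lemma is_Cderive_inv f x a : is_Cderive f x a -> f x <> 0%C ->
  is_Cderive (fun t => (/ f t)%C) x (- a / f x ^ 2)%C.
Proof.
  intros Hf Hfx.
  apply is_Cderive_Re in Hf as Hre; apply is_Cderive_Im in Hf as Him.
  set (q t := Re (f t) ^ 2 + Im (f t) ^ 2).
  assert (Hq : q x <> 0).
  { intros E; apply Hfx; unfold q in E; simpl in E; rewrite !Rmult_1_r in E.
    destruct (f x) as [p1 p2]; destruct (Rplus_sqr_eq_0 p1 p2 E); subst; reflexivity. }
  assert (Dq : is_derive q x (2 * Re (f x) * Re a + 2 * Im (f x) * Im a)).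
  { eapply is_derive_replace.
    - apply is_derive_Rplus; apply is_derive_pow; eassumption.
    - simpl; ring. }
  apply is_Cderive_parts.
  - eapply is_derive_replace; [apply (is_derive_div _ q); eassumption|].
    unfold q in *; destruct (f x) as [p1 p2], a as [a1 a2]; simpl in *.
    field; split; intros E; apply (pow_nonzero _ 2 Hq); nra.
  - eapply is_derive_replace.
    { apply (is_derive_div (fun t => - Im (f t)) q); [exact (is_derive_opp _ x _ Him)|..];
        eassumption. }
    unfold q in *; destruct (f x) as [p1 p2], a as [a1 a2]; simpl in *.
    change (opp a2) with (- a2).
    field; split; intros E; apply (pow_nonzero _ 2 Hq); nra.
Qed.

Lemma is_Cderive_scal_l (c : CC) f x a : is_Cderive f x a ->
  is_Cderive (fun t => (c * f t)%C) x (c * a)%C.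
Proof.
  intros Hf; eapply is_Cderive_replace.
  - exact (is_Cderive_mult _ _ _ _ _ (is_Cderive_const c x) Hf).
  - cbv beta; ring.
Qed.

Lemma is_Cderive_scal_r (c : CC) f x a : is_Cderive f x a ->
  is_Cderive (fun t => (f t * c)%C) x (a * c)%C.
Proof.
  intros Hf; eapply is_Cderive_replace.
  - exact (is_Cderive_mult _ _ _ _ _ Hf (is_Cderive_const c x)).
  - cbv beta; ring.
Qed.

Lemma is_Cderive_comp f g x df dg : is_Cderive f (g x) df -> is_derive g x dg ->
  is_Cderive (fun t => f (g t)) x (RtoC dg * df)%C.
Proof.
  intros Hf Hg; eapply is_Cderive_replace; [exact (is_derive_comp f g x df dg Hf Hg)|].
  destruct df; apply injective_projections; simpl; unfold scal; simpl; unfold mult; simpl; ring.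
Qed.

Lemma is_Cderive_cexp f x a : is_Cderive f x a ->
  is_Cderive (fun t => cexp (f t)) x (a * cexp (f x))%C.
Proof.
  intros Hf.
  apply is_Cderive_Re in Hf as Hre; apply is_Cderive_Im in Hf as Him.
  unfold cexp; apply is_Cderive_parts; simpl.
  - eapply is_derive_replace.
    + apply is_derive_Rmult; (apply is_derive_Rcomp; [eassumption|]).
      * apply is_derive_exp.
      * apply is_derive_cos.
    + unfold Re, Im; ring.
  - eapply is_derive_replace.
    + apply is_derive_Rmult; (apply is_derive_Rcomp; [eassumption|]).
      * apply is_derive_exp.
      * apply is_derive_sin.
    + unfold Re, Im; ring.
Qed.

Lemma is_Cderive_ccosh f x a : is_Cderive f x a ->
  is_Cderive (fun t => ccosh (f t)) x (a * csinh (f x))%C.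
Proof.
  intros Hf; unfold ccosh, csinh, Cdiv.
  eapply is_Cderive_replace.
  - apply is_Cderive_scal_r, is_Cderive_plus; apply is_Cderive_cexp; [exact Hf|].
    exact (is_Cderive_opp _ _ _ Hf).
  - cbv beta; ring.
Qed.

Lemma is_Cderive_csinh f x a : is_Cderive f x a ->
  is_Cderive (fun t => csinh (f t)) x (a * ccosh (f x))%C.
Proof.
  intros Hf; unfold ccosh, csinh, Cdiv.
  eapply is_Cderive_replace.
  - apply is_Cderive_scal_r, is_Cderive_plus; [exact (is_Cderive_cexp _ _ _ Hf)|].
    exact (is_Cderive_opp _ _ _ (is_Cderive_cexp _ _ _ (is_Cderive_opp _ _ _ Hf))).
  - cbv beta; ring.
Qed.

Lemma cexp_mul_cexp_opp (w : CC) : (cexp w * cexp (- w))%C = 1%C.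
Proof.
  destruct w as [a b]; unfold cexp; simpl; rewrite cos_neg, sin_neg.
  apply injective_projections; simpl; [|ring].
  replace (_ - _) with (exp a * exp (- a) * (Rsqr (sin b) + Rsqr (cos b)))
    by (unfold Rsqr; ring).
  rewrite sin2_cos2, <- exp_plus, Rplus_opp_r, exp_0; ring.
Qed.

Lemma ccosh_sqr_sub_csinh_sqr (w : CC) : (ccosh w ^ 2 - csinh w ^ 2)%C = 1%C.
Proof. rewrite <- (cexp_mul_cexp_opp w); unfold ccosh, csinh; field. Qed.

Lemma Cinv_ccosh_sqr (w : CC) : ccosh w <> 0%C -> (/ ccosh w ^ 2)%C = (1 - ctanh w ^ 2)%C.
Proof.
  intros Hc; unfold ctanh.
  transitivity ((ccosh w ^ 2 - csinh w ^ 2) / ccosh w ^ 2)%C.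
  - rewrite ccosh_sqr_sub_csinh_sqr; field; exact Hc.
  - field; exact Hc.
Qed.

Lemma ccosh_neq0 (w : CC) : 0 < Re w -> ccosh w <> 0%C.
Proof.
  destruct w as [a b]; unfold Re; simpl; intros Ha E.
  assert (E2 : (cexp (a, b) + cexp (- (a, b)))%C = 0%C).
  { transitivity (ccosh (a, b) * 2)%C; [unfold ccosh; field|rewrite E; ring]. }
  unfold cexp in E2; simpl in E2; rewrite cos_neg, sin_neg in E2.
  injection E2 as Ere Eim.
  assert (Hcos : cos b = 0).
  { assert (Hprod : cos b * (exp a + exp (- a)) = 0) by lra.
    destruct (Rmult_integral _ _ Hprod) as [|Hsum]; [assumption|].
    pose proof (exp_pos a); pose proof (exp_pos (- a)); lra. }
  assert (Hsin : sin b * (exp a - exp (- a)) = 0) by lra.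
  destruct (Rmult_integral _ _ Hsin) as [Hs|Hdiff].
  - pose proof (sin2_cos2 b) as H; rewrite Hcos, Hs in H; unfold Rsqr in H; lra.
  - assert (Hexp : exp a = exp (- a)) by lra.
    apply exp_inv in Hexp; lra.
Qed.

Lemma is_Cderive_ctanh f x a : is_Cderive f x a -> ccosh (f x) <> 0%C ->
  is_Cderive (fun t => ctanh (f t)) x (a * (1 - ctanh (f x) ^ 2))%C.
Proof.
  intros Hf Hc; unfold ctanh, Cdiv.
  eapply is_Cderive_replace.
  - apply is_Cderive_mult; [exact (is_Cderive_csinh _ _ _ Hf)|].
    exact (is_Cderive_inv _ _ _ (is_Cderive_ccosh _ _ _ Hf) Hc).
  - cbv beta; field; exact Hc.
Qed.

Lemma csqrt_upper_half (L s : R) : 0 < s ->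
  csqrt (RtoC L + Ci * RtoC s)%C =
  (sqrt ((sqrt (L ^ 2 + s ^ 2) + L) / 2), sqrt ((sqrt (L ^ 2 + s ^ 2) - L) / 2)).
Proof.
  intros Hs.
  replace (RtoC L + Ci * RtoC s)%C with ((L, s) : CC)
    by (apply injective_projections; simpl; ring).
  unfold csqrt, Cmod, Re, Im; simpl.
  destruct (Rlt_dec s 0); [lra | reflexivity].
Qed.

Lemma Rabs_lt_sqrt_sum_sqr (L s : R) : 0 < s -> Rabs L < sqrt (L ^ 2 + s ^ 2).
Proof.
  intros Hs; rewrite <- sqrt_Rsqr_abs; apply sqrt_lt_1_alt.
  split; [apply Rle_0_sqr | unfold Rsqr; nra].
Qed.

Lemma Re_csqrt_upper_half_pos (L s : R) :
  0 < s -> 0 < Re (csqrt (RtoC L + Ci * RtoC s)%C).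
Proof.
  intros Hs; rewrite csqrt_upper_half by exact Hs; apply sqrt_lt_R0, Rdiv_lt_0_compat; [|lra].
  pose proof (Rabs_lt_sqrt_sum_sqr L s Hs); pose proof (Rabs_maj2 L); lra.
Qed.

Lemma is_Cderive_csqrt_upper_half (L s : R) : 0 < s ->
  is_Cderive (fun s => csqrt (RtoC L + Ci * RtoC s)%C) s
    (Ci / (2 * csqrt (RtoC L + Ci * RtoC s)))%C.
Proof.
  intros Hs.
  apply (is_derive_ext_loc (V := C_R_NormedModule)
    (fun s => (sqrt ((sqrt (L ^ 2 + s ^ 2) + L) / 2), sqrt ((sqrt (L ^ 2 + s ^ 2) - L) / 2)))).
  { apply (filter_imp (fun t => 0 < t)); [intros t Ht; symmetry; now apply csqrt_upper_half|].
    exact (open_gt 0 s Hs). }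
  rewrite csqrt_upper_half by exact Hs.
  set (M := sqrt (L ^ 2 + s ^ 2)).
  set (X := sqrt ((M + L) / 2)); set (Y := sqrt ((M - L) / 2)).
  assert (HLM : Rabs L < M) by (apply Rabs_lt_sqrt_sum_sqr, Hs).
  pose proof (Rle_abs L); pose proof (Rabs_maj2 L).
  assert (HM2 : M * M = L ^ 2 + s ^ 2) by (apply sqrt_sqrt; nra).
  assert (HX2 : X * X = (M + L) / 2) by (apply sqrt_sqrt; lra).
  assert (HY2 : Y * Y = (M - L) / 2) by (apply sqrt_sqrt; lra).
  assert (HX : 0 < X) by (apply sqrt_lt_R0; lra).
  assert (HY : 0 < Y) by (apply sqrt_lt_R0; lra).
  assert (HXY : s = 2 * X * Y).
  { assert (Hsq : (2 * X * Y) * (2 * X * Y) = s * s).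
    { replace (2 * X * Y * (2 * X * Y)) with (4 * (X * X) * (Y * Y)) by ring.
      rewrite HX2, HY2; nra. }
    assert (Hpos : 0 < 2 * X * Y + s) by nra.
    nra. }
  assert (HMXY : M = X * X + Y * Y) by lra.
  (* with [M = X^2 + Y^2] and [s = 2XY] the target [i / (2 (X + iY))] is [(Y + iX) / (2M)] *)
  apply is_Cderive_parts; simpl; auto_derive;
    replace (L * (L * 1) + s * (s * 1)) with (L ^ 2 + s ^ 2) by ring; fold M;
    try change ((M + L) * / 2) with ((M + L) / 2);
    try change ((M + - L) * / 2) with ((M - L) / 2);
    fold X Y.
  1, 3: split; [nra | split; [lra | exact I]].
  all: rewrite HMXY, HXY; field; split; lra.
Qed.

Lemma RtoC_neq0 (r : R) : r <> 0 -> RtoC r <> 0%C.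
Proof. intros Hr E; apply Hr; now injection E. Qed.

Lemma Re_RtoC_mul (r : R) (z : CC) : Re (RtoC r * z)%C = r * Re z.
Proof. unfold Re; simpl; ring. Qed.

Lemma Cinv_sqr_mul_ccosh_sqr (A z : CC) : A <> 0%C -> ccosh z <> 0%C ->
  (/ (A ^ 2 * ccosh z ^ 2))%C = ((1 - ctanh z ^ 2) / A ^ 2)%C.
Proof. intros HA Hc; rewrite <- (Cinv_ccosh_sqr z Hc); field; now split. Qed.

Lemma is_Cderive_mobius (N z : CC) (Y : R -> CC) x Y' :
  is_Cderive Y x Y' -> ccosh z <> 0%C -> (N + Y x * ctanh z)%C <> 0%C ->
  is_Cderive (fun t => N * ((Y t + N * ctanh z) / (N + Y t * ctanh z)))%C x
    (N ^ 2 * / ((N + Y x * ctanh z) ^ 2 * ccosh z ^ 2) * Y')%C.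
Proof.
  intros HY Hc HD; unfold Cdiv.
  eapply is_Cderive_replace.
  - apply is_Cderive_scal_l, is_Cderive_mult.
    + exact (is_Cderive_plus _ _ _ _ _ HY (is_Cderive_const _ x)).
    + apply is_Cderive_inv; [|exact HD].
      exact (is_Cderive_plus _ _ _ _ _ (is_Cderive_const _ x) (is_Cderive_scal_r _ _ _ _ HY)).
  - cbv beta; rewrite Cinv_sqr_mul_ccosh_sqr by assumption; field; exact HD.
Qed.

Lemma upd_id (sigma : nat -> R) j : upd sigma j (sigma j) = sigma.
Proof.
  apply functional_extensionality; intros i; unfold upd.
  now destruct (Nat.eqb_spec i j); subst.
Qed.

Lemma upd_eq (sigma : nat -> R) j t : upd sigma j t j = t.
Proof. unfold upd; now rewrite Nat.eqb_refl. Qed.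

Lemma upd_neq (sigma : nat -> R) j t k : k <> j -> upd sigma j t k = sigma k.
Proof. intros H; unfold upd; now apply Nat.eqb_neq in H as ->. Qed.

Section Layers.

Variables (lam omega : R) (d mu : nat -> R).

Lemma u_upd_neq sigma j t k :
  k <> j -> u_ lam omega mu (upd sigma j t) k = u_ lam omega mu sigma k.
Proof. intros H; unfold u_; now rewrite upd_neq. Qed.

Lemma N_upd_neq sigma j t k :
  k <> j -> N_ lam omega mu (upd sigma j t) k = N_ lam omega mu sigma k.
Proof. intros H; unfold N_; now rewrite u_upd_neq. Qed.

Lemma Ystep_upd_neq sigma j t k Y : k <> j ->
  Ystep lam omega d mu (upd sigma j t) k Y = Ystep lam omega d mu sigma k Y.
Proof. intros H; unfold Ystep; now rewrite N_upd_neq, u_upd_neq. Qed.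

Lemma Yr_upd_indep n sigma j t i : (j < n - i)%nat ->
  Yr lam omega n d mu (upd sigma j t) i = Yr lam omega n d mu sigma i.
Proof.
  induction i as [|i IH]; intros H; simpl.
  - apply N_upd_neq; lia.
  - rewrite IH by lia; apply Ystep_upd_neq; lia.
Qed.

Lemma Re_u_pos sigma k : 0 < mu k * omega -> 0 < sigma k -> 0 < Re (u_ lam omega mu sigma k).
Proof.
  intros Hm Hs; apply Re_csqrt_upper_half_pos.
  rewrite Rmult_assoc; now apply Rmult_lt_0_compat.
Qed.

Lemma u_neq0 sigma k : 0 < mu k * omega -> 0 < sigma k -> u_ lam omega mu sigma k <> 0%C.
Proof.
  intros Hm Hs E; pose proof (Re_u_pos sigma k Hm Hs) as H.
  rewrite E in H; unfold Re in H; simpl in H; lra.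
Qed.

Lemma is_Cderive_u sigma k : 0 < mu k * omega -> 0 < sigma k ->
  is_Cderive (fun t => u_ lam omega mu (upd sigma k t) k) (sigma k)
    (Ci * RtoC (mu k * omega) / (2 * u_ lam omega mu sigma k))%C.
Proof.
  intros Hm Hs.
  apply (is_Cderive_ext (fun t => csqrt (RtoC (lam ^ 2) + Ci * RtoC (t * mu k * omega))%C)).
  { intros t; unfold u_; now rewrite upd_eq. }
  eapply is_Cderive_replace.
  - eapply (is_Cderive_comp (fun s => csqrt (RtoC (lam ^ 2) + Ci * RtoC s)%C)
      (fun t => t * mu k * omega) _ _ (mu k * omega)).
    + apply is_Cderive_csqrt_upper_half; rewrite Rmult_assoc; now apply Rmult_lt_0_compat.
    + auto_derive; [exact I | ring].
  - change (csqrt _) with (u_ lam omega mu sigma k); field; now apply u_neq0.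
Qed.

Lemma is_Cderive_N sigma k : 0 < mu k * omega -> 0 < sigma k ->
  is_Cderive (fun t => N_ lam omega mu (upd sigma k t) k) (sigma k)
    (/ (2 * u_ lam omega mu sigma k))%C.
Proof.
  intros Hm Hs; unfold N_, Cdiv.
  eapply is_Cderive_replace; [apply is_Cderive_scal_r, is_Cderive_u; assumption|].
  (* [N_] is written with [Defs.Ci], an atom distinct from Coquelicot's [Ci] for [field] *)
  change Defs.Ci with Ci; field.
  repeat split; [now apply u_neq0 | apply RtoC_neq0; lra | exact Ci_nz].
Qed.

Lemma u_eq_N_mul sigma k : 0 < mu k * omega ->
  u_ lam omega mu sigma k = (N_ lam omega mu sigma k * (Ci * RtoC (mu k * omega)))%C.
Proof.
  intros Hm; unfold N_; change Defs.Ci with Ci; field.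
  split; [apply RtoC_neq0; lra | exact Ci_nz].
Qed.

Lemma ccosh_du_neq0 sigma k : 0 < mu k * omega -> 0 < sigma k -> 0 < d k ->
  ccosh (RtoC (d k) * u_ lam omega mu sigma k) <> 0%C.
Proof.
  intros Hm Hs Hd; apply ccosh_neq0; rewrite Re_RtoC_mul.
  apply Rmult_lt_0_compat; [exact Hd | now apply Re_u_pos].
Qed.

Lemma is_Cderive_Ystep_sigma sigma k Y : 0 < mu k * omega -> 0 < sigma k -> 0 < d k ->
  let N := N_ lam omega mu sigma k in
  let u := u_ lam omega mu sigma k in
  let z := (RtoC (d k) * u)%C in
  (N + Y * ctanh z)%C <> 0%C ->
  is_Cderive (fun t => Ystep lam omega d mu (upd sigma k t) k Y) (sigma k)
    ((Y + N * ctanh z) / (N + Y * ctanh z) / (2 * u)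
     + / ((N + Y * ctanh z) ^ 2 * ccosh z ^ 2) / 2
       * (N ^ 2 * RtoC (d k) - Y * (RtoC (d k) * Y + / (Ci * RtoC (mu k * omega)))))%C.
Proof.
  intros Hm Hs Hd N u z HD.
  assert (Hc : ccosh z <> 0%C) by now apply ccosh_du_neq0.
  pose proof (is_Cderive_N sigma k Hm Hs) as HN.
  assert (HT : is_Cderive (fun t => ctanh (RtoC (d k) * u_ lam omega mu (upd sigma k t) k))
     (sigma k)
     (RtoC (d k) * (Ci * RtoC (mu k * omega) / (2 * u)) * (1 - ctanh z ^ 2))%C).
  { eapply is_Cderive_replace.
    - apply is_Cderive_ctanh; [apply is_Cderive_scal_l, is_Cderive_u; assumption|].
      rewrite upd_id; exact Hc.
    - cbv beta; now rewrite upd_id. }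
  unfold Ystep, Cdiv; cbv zeta.
  eapply is_Cderive_replace.
  - apply is_Cderive_mult; [exact HN|]; apply is_Cderive_mult.
    + exact (is_Cderive_plus _ _ _ _ _ (is_Cderive_const _ _) (is_Cderive_mult _ _ _ _ _ HN HT)).
    + apply is_Cderive_inv; [|rewrite upd_id; exact HD].
      exact (is_Cderive_plus _ _ _ _ _ HN (is_Cderive_scal_l Y _ _ _ HT)).
  - cbv beta; rewrite !upd_id; fold N u z.
    rewrite Cinv_sqr_mul_ccosh_sqr by assumption.
    assert (Hu : u = (N * (Ci * RtoC (mu k * omega)))%C) by exact (u_eq_N_mul sigma k Hm).
    assert (HNu : N <> 0%C).
    { intros E; apply (u_neq0 sigma k Hm Hs); fold u; rewrite Hu, E; ring. }
    clearbody z; rewrite Hu.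
    field; repeat split; first [exact HD | exact Ci_nz | exact HNu | apply RtoC_neq0; lra].
Qed.

Variable n : nat.

Definition Y_diag_deriv (sigma : nat -> R) (k : nat) : CC :=
  (a_ lam omega n d mu sigma k / (2 * u_ lam omega mu sigma k)
   + b_ lam omega n d mu sigma k / 2
     * (N_ lam omega mu sigma k ^ 2 * RtoC (d k)
        - Y_ lam omega n d mu sigma (S k)
          * (RtoC (d k) * Y_ lam omega n d mu sigma (S k) + / (Ci * RtoC (mu k * omega)))))%C.

(* [dYr sigma i j] is the partial derivative of [Yr i = Y_(n-i)] in [sigma j]. *)
Fixpoint dYr (sigma : nat -> R) (i j : nat) : CC :=
  match i with
  | O => if Nat.eqb j n then (/ (2 * u_ lam omega mu sigma n))%C else 0%C
  | S i' =>
    let k := (n - S i')%nat in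
    if Nat.eqb j k then Y_diag_deriv sigma k
    else if Nat.ltb k j then
      (N_ lam omega mu sigma k ^ 2 * b_ lam omega n d mu sigma k * dYr sigma i' j)%C
    else 0%C
  end.

Hypothesis Homega : 0 < omega.
Hypothesis Hd : forall k, (1 <= k <= n - 1)%nat -> 0 < d k.
Hypothesis Hmu : forall k, (1 <= k <= n)%nat -> 0 < mu k.

Lemma is_Cderive_Yr sigma (Hsigma : forall k, (1 <= k <= n)%nat -> 0 < sigma k)
  (Hden : forall k, (1 <= k <= n - 1)%nat ->
     (N_ lam omega mu sigma k
      + Y_ lam omega n d mu sigma (S k) * ctanh (RtoC (d k) * u_ lam omega mu sigma k))%C <> 0%C)
  i j : (i <= n - 1)%nat -> (1 <= j <= n)%nat ->
  is_Cderive (fun t => Yr lam omega n d mu (upd sigma j t) i) (sigma j) (dYr sigma i j).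
Proof.
  revert j; induction i as [|i IH]; intros j Hi Hj; cbn [dYr].
  - destruct (Nat.eqb_spec j n) as [->|Hjn].
    + apply is_Cderive_N; [apply Rmult_lt_0_compat; [apply Hmu; lia | exact Homega]|].
      apply Hsigma; lia.
    + apply (is_Cderive_ext (fun _ => Yr lam omega n d mu sigma 0)), is_Cderive_const.
      intros t; apply eq_sym, Yr_upd_indep; lia.
  - set (k := (n - S i)%nat).
    assert (Hki : (n - S k)%nat = i) by (unfold k; lia).
    assert (Hm : 0 < mu k * omega) by (apply Rmult_lt_0_compat; [apply Hmu; lia | exact Homega]).
    assert (HD := Hden k ltac:(unfold k; lia)); unfold Y_ in HD; rewrite Hki in HD.
    destruct (Nat.eqb_spec j k) as [->|Hjk]; [|destruct (Nat.ltb_spec k j) as [Hkj|Hjk']].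
    + apply (is_Cderive_ext
        (fun t => Ystep lam omega d mu (upd sigma k t) k (Yr lam omega n d mu sigma i))).
      { intros t; cbn [Yr]; fold k; now rewrite Yr_upd_indep by (unfold k; lia). }
      unfold Y_diag_deriv, a_, b_, Y_; rewrite Hki.
      apply is_Cderive_Ystep_sigma.
      - exact Hm.
      - apply Hsigma; unfold k; lia.
      - apply Hd; unfold k; lia.
      - exact HD.
    + apply (is_Cderive_ext
        (fun t => Ystep lam omega d mu sigma k (Yr lam omega n d mu (upd sigma j t) i))).
      { intros t; cbn [Yr]; fold k; now rewrite Ystep_upd_neq. }
      unfold b_, Y_, Ystep; rewrite Hki; cbv zeta.
      eapply is_Cderive_replace.
      * apply (is_Cderive_mobius _ _ (fun t => Yr lam omega n d mu (upd sigma j t) i)).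
        -- apply IH; lia.
        -- apply ccosh_du_neq0; [exact Hm | apply Hsigma | apply Hd]; unfold k; lia.
        -- cbv beta; now rewrite upd_id.
      * cbv beta; now rewrite upd_id.
    + apply (is_Cderive_ext (fun _ => Yr lam omega n d mu sigma (S i))), is_Cderive_const.
      intros t; apply eq_sym, Yr_upd_indep; unfold k in *; lia.
Qed.

End Layers.

Theorem lemma1 (lam omega : R) (n : nat) (d mu sigma : nat -> R)
  (Hlam : 0 <= lam) (Homega : 0 < omega) (Hn : (1 <= n)%nat)
  (Hd : forall k, (1 <= k <= n - 1)%nat -> 0 < d k)
  (Hmu : forall k, (1 <= k <= n)%nat -> 0 < mu k)
  (Hsigma : forall k, (1 <= k <= n)%nat -> 0 < sigma k)
  (Hden : forall k, (1 <= k <= n - 1)%nat ->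
     (N_ lam omega mu sigma k
      + Y_ lam omega n d mu sigma (S k)
        * ctanh (RtoC (d k) * u_ lam omega mu sigma k))%C <> 0%C) :
  exists Yp : nat -> nat -> CC,
    (forall k j, (1 <= k <= n)%nat -> (1 <= j <= n)%nat ->
       is_derive (V := C_R_NormedModule)
         (fun t => Y_ lam omega n d mu (upd sigma j t) k) (sigma j) (Yp k j)) /\
    Yp n n = (/ (2 * u_ lam omega mu sigma n))%C /\
    (forall j, (1 <= j <= n - 1)%nat -> Yp n j = 0%C) /\
    (forall k, (1 <= k <= n - 1)%nat ->
       let Nk := N_ lam omega mu sigma k in
       let uk := u_ lam omega mu sigma k in
       let ak := a_ lam omega n d mu sigma k in
       let bk := b_ lam omega n d mu sigma k in
       let Y1 := Y_ lam omega n d mu sigma (S k) in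
       (forall j, (k + 1 <= j <= n)%nat -> Yp k j = (Nk ^ 2 * bk * Yp (S k) j)%C) /\
       Yp k k = (ak / (2 * uk)
                 + bk / 2 * (Nk ^ 2 * RtoC (d k)
                             - Y1 * (RtoC (d k) * Y1 + / (Ci * RtoC (mu k * omega)))))%C /\
       (forall j, (1 <= j <= k - 1)%nat -> Yp k j = 0%C)).
Proof.
  exists (fun k j => dYr lam omega d mu n sigma (n - k) j).
  split; [|split; [|split]].
  - intros k j Hk Hj.
    exact (is_Cderive_Yr lam omega d mu n Homega Hd Hmu sigma Hsigma Hden (n - k) j ltac:(lia) Hj).
  - rewrite Nat.sub_diag; cbn [dYr]; now rewrite Nat.eqb_refl.
  - intros j Hj; rewrite Nat.sub_diag; cbn [dYr].
    destruct (Nat.eqb_spec j n); [lia | reflexivity].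
  - intros k Hk Nk uk ak bk Y1.
    replace (n - k)%nat with (S (n - S k)) by lia; cbn [dYr].
    replace (n - S (n - S k))%nat with k by lia.
    split; [|split].
    + intros j Hj; destruct (Nat.eqb_spec j k); [lia|].
      destruct (Nat.ltb_spec k j); [reflexivity | lia].
    + now rewrite Nat.eqb_refl.
    + intros j Hj; destruct (Nat.eqb_spec j k); [lia|].
      destruct (Nat.ltb_spec k j); [lia | reflexivity].
Qed.
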